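(* Let $s>0$ and let $f:[0,\infty)\to\mathbb R$ be twice differentiable with $\int_0^s (f'(u))^2du<\infty$. Let $\omega(\tau,x)$ be a solution of the heat equation $\omega_\tau=\frac12\omega_{xx}$; in particular, $\omega(\tau,x)=\frac1{2\pi}\int_{-\infty}^\infty \Pi(y)e^{-\frac12 y^2\tau+iyx}\,dy$ for an arbitrary function $\Pi$ for which this integral is well defined. Then $$w(t,a)=e^{\frac12\int_t^s (f'(u))^2du+af'(t)}\,\omega\Big(s-t,\;a+\int_t^s f'(u)\,du\Big)$$ is a solution of $$-w_t(t,a)+f''(t)\,a\,w(t,a)=\frac12 w_{aa}(t,a),\quad (t,a)\in[0,s)\times\mathbb R^+.$$ *)

From Stdlib Require Import Reals.
From Coquelicot Require Import Coquelicot.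

(* For x in the
   interior of D this is the usual derivative; at a boundary point such
   as 0 for D = [0, +oo) it is the one-sided derivative. *)
Definition is_derive_within {V : NormedModule R_AbsRing}
  (D : R -> Prop) (g : R -> V) (x : R) (l : V) : Prop :=
  filterlim (fun y => scal (/ (y - x)) (minus (g y) (g x)))
    (within (fun y => D y /\ y <> x) (locally x)) (locally l).

Definition halfline (y : R) : Prop := 0 <= y.

Definition heat_solution (om : R -> R -> C) : Prop :=
  exists om_t om_x om_xx : R -> R -> C,
    forall tau x : R, 0 < tau ->
      is_derive (fun tau' => om tau' x) tau (om_t tau x) /\
      is_derive (fun x' => om tau x') x (om_x tau x) /\
      is_derive (fun x' => om_x tau x') x (om_xx tau x) /\
      continuous (fun p : R * R => om_t (fst p) (snd p)) (tau, x) /\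
      continuous (fun p : R * R => om_x (fst p) (snd p)) (tau, x) /\
      om_t tau x = Cmult (RtoC (/ 2)) (om_xx tau x).

Definition w_of (f' : R -> R) (om : R -> R -> C) (s t a : R) : C :=
  Cmult (RtoC (exp (/ 2 * RInt (fun u => f' u ^ 2) t s + a * f' t)))
        (om (s - t) (a + RInt f' t s)).

(* By the chain rule, w_t involves om_tau and
   om_x, while w_aa involves om_x and om_xx; substituting om_tau = 1/2 om_xx, the terms in
   f'(t)^2 om and f'(t) om_x cancel and -w_t + f''(t) a w = 1/2 w_aa remains.  Since f' is
   only differentiable on [0, +oo), it is first continued to R by its tangent line at 0;
   the computation is done there with two-sided derivatives, and the one-sided
   derivative at t = 0 is recovered by restriction. *)

From Stdlib Require Import Reals Lra.
From Coquelicot Require Import Coquelicot.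

Lemma is_derive_within_halfline_eps (g : R -> R) (x l : R) :
  is_derive_within halfline g x l ->
  forall eps, 0 < eps -> exists delta, 0 < delta /\
    forall y, Rabs (y - x) < delta -> 0 <= y -> y <> x ->
      Rabs ((g y - g x) / (y - x) - l) < eps.
Proof.
  intros Hg eps Heps.
  destruct (proj1 (filterlim_locally _ _) Hg (mkposreal eps Heps)) as [d Hd].
  exists d; split; [apply cond_pos|].
  intros y Hyx Hy Hneq.
  specialize (Hd y Hyx (conj Hy Hneq)).
  unfold Rdiv; rewrite Rmult_comm; exact Hd.
Qed.

Lemma is_derive_within_halfline_interior (g : R -> R) (x l : R) :
  0 < x -> is_derive_within halfline g x l -> is_derive g x l.
Proof.
  intros Hx Hg. apply is_derive_Reals. intros eps Heps.
  destruct (is_derive_within_halfline_eps g x l Hg eps Heps) as [d [Hd Hdiff]].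
  exists (mkposreal (Rmin d x) (Rmin_pos _ _ Hd Hx)).
  intros h Hh Hhd; simpl in Hhd.
  replace h with (x + h - x) at 2 by ring.
  apply Hdiff; [| | lra].
  - replace (x + h - x) with h by ring. eapply Rlt_le_trans; [exact Hhd|apply Rmin_l].
  - apply Rabs_def2 in Hhd. pose proof (Rmin_r d x). lra.
Qed.

Definition extend_left (g : R -> R) (l : R) (y : R) : R :=
  if Rle_dec 0 y then g y else g 0 + l * y.

Lemma extend_left_eq (g : R -> R) (l y : R) : 0 <= y -> extend_left g l y = g y.
Proof. intros Hy; unfold extend_left; destruct (Rle_dec 0 y); [reflexivity|lra]. Qed.

Lemma is_derive_extend_left_0 (g : R -> R) (l : R) :
  is_derive_within halfline g 0 l -> is_derive (extend_left g l) 0 l.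
Proof.
  intros Hg. apply is_derive_Reals. intros eps Heps.
  destruct (is_derive_within_halfline_eps g 0 l Hg eps Heps) as [d [Hd Hdiff]].
  exists (mkposreal d Hd). intros h Hh Hhd; simpl in Hhd.
  rewrite Rplus_0_l, (extend_left_eq g l 0) by lra.
  unfold extend_left; destruct (Rle_dec 0 h) as [H0|H0].
  - replace h with (h - 0) at 2 by ring.
    apply Hdiff; rewrite ?Rminus_0_r; [exact Hhd|exact H0|exact Hh].
  - replace ((g 0 + l * h - g 0) / h - l) with 0 by (field; exact Hh).
    rewrite Rabs_R0; exact Heps.
Qed.

Lemma is_derive_extend_left (g g' : R -> R) :
  (forall y, 0 <= y -> is_derive_within halfline g y (g' y)) ->
  forall y, is_derive (extend_left g (g' 0)) y (g' (Rmax 0 y)).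
Proof.
  intros Hg y.
  destruct (Rtotal_order y 0) as [Hy|[->|Hy]].
  - rewrite Rmax_left by lra.
    apply (is_derive_ext_loc (fun z => g 0 + g' 0 * z)).
    + exists (mkposreal (- y) ltac:(lra)). intros z Hz.
      change (Rabs (z - y) < - y) in Hz. apply Rabs_def2 in Hz.
      unfold extend_left. destruct (Rle_dec 0 z); [lra|reflexivity].
    + auto_derive; [exact I|ring].
  - rewrite Rmax_left by lra. apply is_derive_extend_left_0, Hg; lra.
  - rewrite Rmax_right by lra.
    apply (is_derive_ext_loc g).
    + exists (mkposreal y Hy). intros z Hz.
      change (Rabs (z - y) < y) in Hz. apply Rabs_def2 in Hz. symmetry; apply extend_left_eq; lra.
    + apply is_derive_within_halfline_interior; [exact Hy|apply Hg; lra].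
Qed.

Lemma is_derive_within_halfline_of_eq {V : NormedModule R_AbsRing} (h g : R -> V) (t : R) (l : V) :
  0 <= t -> (forall y, 0 <= y -> h y = g y) -> is_derive h t l ->
  is_derive_within halfline g t l.
Proof.
  intros Ht Hhg [_ Hh].
  apply filterlim_locally. intros eps.
  assert (Heps2 : 0 < eps / 2) by (destruct eps; simpl; lra).
  destruct (Hh t (fun P HP => HP) (mkposreal _ Heps2)) as [d Hd].
  exists d. intros y Hyt [Hy Hneq].
  specialize (Hd y Hyt); simpl in Hd.
  rewrite <- !Hhg by assumption.
  apply norm_compat1.
  assert (Hdist : 0 < Rabs (y - t)) by (apply Rabs_pos_lt; lra).
  apply Rle_lt_trans with
    (norm (scal (/ (y - t)) (minus (minus (h y) (h t)) (scal (minus y t) l)))).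
  { right; f_equal; symmetry. set (M := NormedModule.ModuleSpace R_AbsRing V).
    rewrite (@scal_minus_distr_l _ M), (@scal_assoc _ M).
    change (mult (/ (y - t)) (minus y t)) with (/ (y - t) * (y - t)).
    rewrite Rinv_l by lra. now rewrite (@scal_one _ M). }
  eapply Rle_lt_trans; [apply (@norm_scal R_AbsRing V)|].
  change (abs (/ (y - t))) with (Rabs (/ (y - t))).
  change (norm (minus y t)) with (Rabs (y - t)) in Hd.
  rewrite Rabs_inv.
  apply Rle_lt_trans with (/ Rabs (y - t) * (eps / 2 * Rabs (y - t))).
  - apply Rmult_le_compat_l; [left; apply Rinv_0_lt_compat|]; assumption.
  - field_simplify; [destruct eps; simpl; lra|lra].
Qed.

Lemma is_derive_scal_fct {V : NormedModule R_AbsRing}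
    (k : R -> R) (g : R -> V) (x dk : R) (dg : V) :
  is_derive k x dk -> is_derive g x dg ->
  is_derive (fun y => scal (k y) (g y)) x (plus (scal dk (g x)) (scal (k x) dg)).
Proof.
  intros Hk Hg. unfold is_derive.
  eapply filterdiff_ext_lin.
  - exact (@filterdiff_scal_fct R_AbsRing _ V x k g _ _ Rmult_comm Hk Hg).
  - intros y. rewrite scal_distr_l, !scal_assoc.
    change (mult y (k x)) with (y * k x). rewrite (Rmult_comm y (k x)).
    reflexivity.
Qed.

Lemma is_derive_fst (h : R -> C) (x : R) (l : C) :
  is_derive h x l -> is_derive (fun y => fst (h y)) x (fst l).
Proof.
  intros Hh. eapply filterdiff_ext_lin.
  - apply (filterdiff_comp' (U := R_NormedModule) (V := C_R_NormedModule) (W := R_NormedModule)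
             h fst x _ fst Hh).
    apply filterdiff_linear, (@is_linear_fst R_AbsRing R_NormedModule R_NormedModule).
  - reflexivity.
Qed.

Lemma is_derive_snd (h : R -> C) (x : R) (l : C) :
  is_derive h x l -> is_derive (fun y => snd (h y)) x (snd l).
Proof.
  intros Hh. eapply filterdiff_ext_lin.
  - apply (filterdiff_comp' (U := R_NormedModule) (V := C_R_NormedModule) (W := R_NormedModule)
             h snd x _ snd Hh).
    apply filterdiff_linear, (@is_linear_snd R_AbsRing R_NormedModule R_NormedModule).
  - reflexivity.
Qed.

Lemma is_derive_pair (h1 h2 : R -> R) (x l1 l2 : R) :
  is_derive h1 x l1 -> is_derive h2 x l2 ->
  is_derive (V := C_R_NormedModule) (fun y => (h1 y, h2 y)) x (l1, l2).
Proof.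
  intros H1 H2. eapply filterdiff_ext_lin.
  - apply (filterdiff_comp'_2 h1 h2 (fun a b => (a, b) : C) x _ _ (fun a b => (a, b) : C) H1 H2).
    apply filterdiff_linear.
    apply (is_linear_prod (K := R_AbsRing)
             (T := prod_NormedModule R_AbsRing R_NormedModule R_NormedModule)
             (U := R_NormedModule) (V := R_NormedModule));
      [apply is_linear_fst|apply is_linear_snd].
  - reflexivity.
Qed.

Lemma is_derive_comp_2d (F Ft : R -> R -> R) (Fx : R) (T X : R -> R) (t dT dX : R) :
  locally (T t, X t)
    (fun p : R * R => is_derive (fun z => F z (snd p)) (fst p) (Ft (fst p) (snd p))) ->
  is_derive (F (T t)) (X t) Fx ->
  continuous (fun p : R * R => Ft (fst p) (snd p)) (T t, X t) ->
  is_derive T t dT -> is_derive X t dX ->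
  is_derive (fun u => F (T u) (X u)) t (Ft (T t) (X t) * dT + Fx * dX).
Proof.
  intros HFt HFx HFt_cont HT HX.
  assert (HF : differentiable_pt_lim F (T t) (X t) (Ft (T t) (X t)) Fx).
  { apply filterdiff_differentiable_pt_lim.
    eapply filterdiff_ext_lin; [exact (is_derive_filterdiff F _ _ Ft Fx HFt HFx HFt_cont)|].
    intros [p q]; cbn. unfold plus, scal; simpl; unfold mult; simpl. ring. }
  apply is_derive_Reals, derivable_pt_lim_comp_2d; [exact HF| |];
    apply is_derive_Reals; assumption.
Qed.

Lemma is_derive_comp_2d_C (F Ft : R -> R -> C) (Fx : C) (T X : R -> R) (t dT dX : R) :
  locally (T t, X t)
    (fun p : R * R => is_derive (fun z => F z (snd p)) (fst p) (Ft (fst p) (snd p))) ->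
  is_derive (F (T t)) (X t) Fx ->
  continuous (fun p : R * R => Ft (fst p) (snd p)) (T t, X t) ->
  is_derive T t dT -> is_derive X t dX ->
  is_derive (fun u => F (T u) (X u)) t (plus (scal dT (Ft (T t) (X t))) (scal dX Fx)).
Proof.
  intros HFt HFx HFt_cont HT HX.
  apply (is_derive_ext (fun u => (fst (F (T u) (X u)), snd (F (T u) (X u))))).
  { intros u; now destruct (F (T u) (X u)). }
  replace (plus (scal dT (Ft (T t) (X t))) (scal dX Fx))
    with ((fst (Ft (T t) (X t)) * dT + fst Fx * dX, snd (Ft (T t) (X t)) * dT + snd Fx * dX) : C)
    by (destruct (Ft (T t) (X t)), Fx; cbn; unfold prod_plus, prod_scal, plus, scal; simpl;
        unfold mult, plus; simpl; f_equal; ring).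
  apply is_derive_pair.
  - apply (is_derive_comp_2d (fun p q => fst (F p q)) (fun p q => fst (Ft p q))); auto.
    + eapply filter_imp; [|exact HFt]. intros p; apply is_derive_fst.
    + now apply is_derive_fst.
    + apply (continuous_comp (fun p : R * R => Ft (fst p) (snd p)) fst), continuous_fst.
      exact HFt_cont.
  - apply (is_derive_comp_2d (fun p q => snd (F p q)) (fun p q => snd (Ft p q))); auto.
    + eapply filter_imp; [|exact HFt]. intros p; apply is_derive_snd.
    + now apply is_derive_snd.
    + apply (continuous_comp (fun p : R * R => Ft (fst p) (snd p)) snd), continuous_snd.
      exact HFt_cont.
Qed.

Lemma is_derive_shift {V : NormedModule R_AbsRing} (g : R -> V) (c x : R) (l : V) :
  is_derive g (x + c) l -> is_derive (fun y => g (y + c)) x l.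
Proof.
  intros Hg.
  assert (Hc : is_derive (fun y => y + c) x 1) by (auto_derive; [exact I|ring]).
  pose proof (is_derive_comp g (fun y => y + c) x l 1 Hg Hc) as H.
  now rewrite (@scal_one _ (NormedModule.ModuleSpace R_AbsRing V)) in H.
Qed.

Lemma is_derive_RInt_lower (g : R -> R) (t s : R) :
  (forall u, continuous g u) -> is_derive (fun u => RInt g u s) t (- g t).
Proof.
  intros Hg. apply (is_derive_RInt' g _ t s).
  - apply filter_forall. intros u. apply (RInt_correct (V := R_CompleteNormedModule)).
    apply ex_RInt_continuous. intros; apply Hg.
  - apply Hg.
Qed.

Definition w_weight (g : R -> R) (s t a : R) : R :=
  exp (/ 2 * RInt (fun u => g u ^ 2) t s + a * g t).

Definition w_shift (g : R -> R) (s t a : R) : R := a + RInt g t s.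

Lemma w_of_weight_shift (g : R -> R) (om : R -> R -> C) (s t a : R) :
  w_of g om s t a = scal (w_weight g s t a) (om (s - t) (w_shift g s t a)).
Proof.
  unfold w_of, w_weight, w_shift. destruct (om (s - t) (a + RInt g t s)).
  cbn; unfold prod_scal, scal; simpl; unfold mult; simpl. unfold Cmult, RtoC; simpl.
  f_equal; ring.
Qed.

Lemma w_of_ext (g h : R -> R) (om : R -> R -> C) (s t a : R) :
  0 <= s -> 0 <= t -> (forall u, 0 <= u -> g u = h u) -> w_of g om s t a = w_of h om s t a.
Proof.
  intros Hs Ht Hgh.
  assert (Hseg : forall u, Rmin t s < u < Rmax t s -> 0 <= u).
  { intros u [Hu _]. pose proof (Rmin_glb _ _ _ Ht Hs). lra. }
  unfold w_of. rewrite (Hgh t Ht).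
  rewrite (RInt_ext g h) by (intros u Hu; apply Hgh, Hseg, Hu).
  rewrite (RInt_ext (fun u => g u ^ 2) (fun u => h u ^ 2))
    by (intros u Hu; now rewrite Hgh by apply Hseg, Hu).
  reflexivity.
Qed.

Section WholeLine.

Variables (F F' : R -> R) (om om_t om_x om_xx : R -> R -> C) (s : R).
Hypothesis HF : forall u, is_derive F u (F' u).
Hypothesis Hom_t : forall tau x, 0 < tau -> is_derive (fun tau' => om tau' x) tau (om_t tau x).
Hypothesis Hom_x : forall tau x, 0 < tau -> is_derive (fun x' => om tau x') x (om_x tau x).
Hypothesis Hom_xx : forall tau x, 0 < tau -> is_derive (fun x' => om_x tau x') x (om_xx tau x).
Hypothesis Hom_t_cont :
  forall tau x, 0 < tau -> continuous (fun p : R * R => om_t (fst p) (snd p)) (tau, x).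
Hypothesis Hheat : forall tau x, 0 < tau -> om_t tau x = Cmult (RtoC (/ 2)) (om_xx tau x).

Lemma continuous_F (u : R) : continuous F u.
Proof. apply (ex_derive_continuous (V := R_NormedModule)). exists (F' u); apply HF. Qed.

Lemma is_derive_w_weight_t (t a : R) :
  is_derive (fun t' => w_weight F s t' a) t
    (w_weight F s t a * (/ 2 * - F t ^ 2 + a * F' t)).
Proof.
  assert (HF2 : is_derive (fun u => RInt (fun v => F v ^ 2) u s) t (- F t ^ 2)).
  { apply (is_derive_RInt_lower (fun v => F v ^ 2)). intros u.
    apply (continuous_comp F (fun y => y ^ 2)); [apply continuous_F|].
    apply (ex_derive_continuous (V := R_NormedModule)); auto_derive; exact I. }
  assert (Hexponent : is_derive (fun u => / 2 * RInt (fun v => F v ^ 2) u s + a * F u) t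
                        (/ 2 * - F t ^ 2 + a * F' t))
    by (apply (is_derive_plus (V := R_NormedModule)); apply is_derive_scal; [exact HF2|apply HF]).
  pose proof (is_derive_comp exp _ t _ _ (is_derive_exp _) Hexponent) as H.
  unfold w_weight. rewrite Rmult_comm. exact H.
Qed.

Lemma is_derive_w_shift_t (t a : R) : is_derive (fun t' => w_shift F s t' a) t (- F t).
Proof.
  pose proof (is_derive_plus _ _ t _ _ (is_derive_const a t)
                (is_derive_RInt_lower F t s continuous_F)) as H.
  now rewrite plus_zero_l in H.
Qed.

Lemma is_derive_om_along_t (t a : R) : t < s ->
  is_derive (fun t' => om (s - t') (w_shift F s t' a)) t
    (plus (scal (-1) (om_t (s - t) (w_shift F s t a)))
          (scal (- F t) (om_x (s - t) (w_shift F s t a)))).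
Proof.
  intros Hts.
  apply (is_derive_comp_2d_C om om_t _ (fun u => s - u) (fun u => w_shift F s u a)).
  - exists (mkposreal (s - t) ltac:(lra)). intros [tau x] [Htau _].
    change (Rabs (tau - (s - t)) < s - t) in Htau. apply Rabs_def2 in Htau.
    apply Hom_t; simpl; lra.
  - apply Hom_x; lra.
  - apply Hom_t_cont; lra.
  - auto_derive; [exact I|ring].
  - apply is_derive_w_shift_t.
Qed.

Lemma is_derive_w_of_t (t a : R) : t < s ->
  is_derive (fun t' => w_of F om s t' a) t
    (plus (scal (w_weight F s t a * (/ 2 * - F t ^ 2 + a * F' t)) (om (s - t) (w_shift F s t a)))
          (scal (w_weight F s t a)
                (plus (scal (-1) (om_t (s - t) (w_shift F s t a)))
                      (scal (- F t) (om_x (s - t) (w_shift F s t a)))))).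
Proof.
  intros Hts.
  apply (is_derive_ext (fun t' => scal (w_weight F s t' a) (om (s - t') (w_shift F s t' a)))).
  { intros t'; symmetry; apply w_of_weight_shift. }
  exact (is_derive_scal_fct _ _ t _ _ (is_derive_w_weight_t t a) (is_derive_om_along_t t a Hts)).
Qed.

Lemma is_derive_w_weight_a (t a : R) :
  is_derive (fun a' => w_weight F s t a') a (w_weight F s t a * F t).
Proof. unfold w_weight. set (c := RInt _ t s). auto_derive; [exact I|ring]. Qed.

Lemma is_derive_along_a (g g' : R -> R -> C) (t a : R) :
  (forall tau x, 0 < tau -> is_derive (fun x' => g tau x') x (g' tau x)) -> t < s ->
  is_derive (fun a' => g (s - t) (w_shift F s t a')) a (g' (s - t) (w_shift F s t a)).
Proof. intros Hg Hts. apply (is_derive_shift (g (s - t))), Hg; lra. Qed.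

Definition w_of_da (t a : R) : C :=
  plus (scal (w_weight F s t a * F t) (om (s - t) (w_shift F s t a)))
       (scal (w_weight F s t a) (om_x (s - t) (w_shift F s t a))).

Lemma is_derive_w_of_a (t a : R) : t < s ->
  is_derive (fun a' => w_of F om s t a') a (w_of_da t a).
Proof.
  intros Hts.
  apply (is_derive_ext (fun a' => scal (w_weight F s t a') (om (s - t) (w_shift F s t a')))).
  { intros a'; symmetry; apply w_of_weight_shift. }
  exact (is_derive_scal_fct _ _ a _ _ (is_derive_w_weight_a t a)
           (is_derive_along_a om om_x t a Hom_x Hts)).
Qed.

Lemma is_derive_w_of_da (t a : R) : t < s ->
  is_derive (w_of_da t) a
    (plus (plus (scal (w_weight F s t a * F t * F t) (om (s - t) (w_shift F s t a)))
                (scal (w_weight F s t a * F t) (om_x (s - t) (w_shift F s t a))))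
          (plus (scal (w_weight F s t a * F t) (om_x (s - t) (w_shift F s t a)))
                (scal (w_weight F s t a) (om_xx (s - t) (w_shift F s t a))))).
Proof.
  intros Hts. unfold w_of_da. apply (is_derive_plus (V := C_R_NormedModule)).
  - apply (is_derive_scal_fct (fun a' => w_weight F s t a' * F t)
                              (fun a' => om (s - t) (w_shift F s t a'))).
    + unfold w_weight. set (c := RInt _ t s). auto_derive; [exact I|ring].
    + exact (is_derive_along_a om om_x t a Hom_x Hts).
  - exact (is_derive_scal_fct _ _ a _ _ (is_derive_w_weight_a t a)
             (is_derive_along_a om_x om_xx t a Hom_xx Hts)).
Qed.

Lemma w_of_backward_heat (t a : R) : t < s ->
  exists (dt daa : C) (Wa : R -> C),
    is_derive (fun t' => w_of F om s t' a) t dt /\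
    (forall a', is_derive (fun a'' => w_of F om s t a'') a' (Wa a')) /\
    is_derive Wa a daa /\
    Cplus (Copp dt) (Cmult (RtoC (F' t * a)) (w_of F om s t a)) = Cmult (RtoC (/ 2)) daa.
Proof.
  intros Hts. do 3 eexists.
  split; [exact (is_derive_w_of_t t a Hts)|].
  split; [intros a'; exact (is_derive_w_of_a t a' Hts)|].
  split; [exact (is_derive_w_of_da t a Hts)|].
  rewrite w_of_weight_shift, Hheat by lra.
  destruct (om (s - t) (w_shift F s t a)) as [o1 o2].
  destruct (om_x (s - t) (w_shift F s t a)) as [x1 x2].
  destruct (om_xx (s - t) (w_shift F s t a)) as [y1 y2].
  cbn; unfold prod_plus, prod_scal, plus, scal, Cplus, Cmult, Copp, RtoC; simpl.
  unfold mult, plus; simpl. f_equal; field.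
Qed.

End WholeLine.

Theorem theorem3 (s : R) (f f' f'' : R -> R) (om : R -> R -> C) :
  0 < s ->
  (forall t : R, 0 <= t ->
     is_derive_within halfline f t (f' t) /\
     is_derive_within halfline f' t (f'' t)) ->
  ex_RInt (fun u => f' u ^ 2) 0 s ->
  heat_solution om ->
  forall t a : R, 0 <= t < s -> 0 <= a ->
    exists (dt daa : C) (Wa : R -> C),
      is_derive_within halfline (fun t' => w_of f' om s t' a) t dt /\
      (forall a' : R, is_derive (fun a'' => w_of f' om s t a'') a' (Wa a')) /\
      is_derive Wa a daa /\
      Cplus (Copp dt) (Cmult (RtoC (f'' t * a)) (w_of f' om s t a))
        = Cmult (RtoC (/ 2)) daa.
Proof.
  intros Hs Hf _ [om_t [om_x [om_xx Hom]]] t a [Ht Hts] _.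
  set (F := extend_left f' (f'' 0)).
  assert (HF : forall u, is_derive F u (f'' (Rmax 0 u)))
    by (apply is_derive_extend_left; intros; apply Hf; assumption).
  assert (HFf' : forall t' a', 0 <= t' -> w_of F om s t' a' = w_of f' om s t' a')
    by (intros; apply w_of_ext; [lra|assumption|apply extend_left_eq]).
  destruct (w_of_backward_heat F _ om om_t om_x om_xx s HF) with (t := t) (a := a)
    as (dt & daa & Wa & Hdt & HWa & Hdaa & Heq);
    try (intros tau x Htau; now destruct (Hom tau x Htau) as (? & ? & ? & ? & ? & ?)).
  { exact Hts. }
  exists dt, daa, Wa. split; [|split; [|split]].
  - apply (is_derive_within_halfline_of_eq (fun t' => w_of F om s t' a)); [exact Ht| |exact Hdt].
    intros; now apply HFf'.
  - intros a'. apply (is_derive_ext (fun a'' => w_of F om s t a'')); [|apply HWa].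
    intros; now apply HFf'.
  - exact Hdaa.
  - rewrite Rmax_right, HFf' in Heq by lra. exact Heq.
Qed.
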